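(* Suppose $d=2$ and let $\lambda\in\mathbb R$. Then $L,(L^*+\lambda)^2$ is a Leonard pair on $\mathcal P_d(\mathbb R)$ if and only if $r\neq s$ and $2(\lambda+1)\in\left\{\frac{r-s}{r+s+2},\frac{s-r}{r+s+4}\right\}$.
   Context: Let $r,s\in(-1,\infty)$. Write $(x)_i=x(x+1)\cdots(x+i-1)$, $(x)_0=1$. For $0\le i\le d$ put $\theta_i=(d-i)(d-i+r+s+1)$ (distinct) and $\theta^*_i=i$. Put $b^*_i=\frac{(d-i)(i-d-s)(2d-2i+r+s+2)_i}{(2d-2i+r+s)_{i+1}}$ ($0\le i\le d-1$), $c^*_i=\frac{i(i-d-r-1)(d-i+r+s+1)_{d-i}}{(d-i+r+s+2)_{d-i+1}}$ ($1\le i\le d$), $b^*_d=c^*_0=0$, and $a^*_i=\theta^*_0-b^*_i-c^*_i$. Let $\mathcal P_d(\mathbb R)$ be the real polynomials of degree at most $d$, each determined by its values at $\theta_0,\dots,\theta_d$. Let $L,L^*$ be the linear maps on $\mathcal P_d(\mathbb R)$ with $(Lf)(\theta_i)=\theta_i f(\theta_i)$ and $(L^*f)(\theta_i)=b^*_i f(\theta_{i+1})+a^*_i f(\theta_i)+c^*_i f(\theta_{i-1})$ ($0\le i\le d$; terms with coefficient $b^*_d$ or $c^*_0$ omitted); $\lambda$ stands for $\lambda$ times the identity. A square matrix is irreducible tridiagonal if its nonzero entries lie on the diagonal, subdiagonal or superdiagonal and all subdiagonal and superdiagonal entries are nonzero. A Leonard pair on a nonzero finite-dimensional vector space $V$ is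 an ordered pair $A,A^*$ of linear maps on $V$ such that there is an ordered basis in which $A$ is diagonal and $A^*$ is irreducible tridiagonal, and there is an ordered basis in which $A^*$ is diagonal and $A$ is irreducible tridiagonal. *)

From mathcomp Require Import all_boot all_order all_algebra.
From mathcomp Require Import reals.
Set Implicit Arguments. Unset Strict Implicit. Unset Printing Implicit Defensive.
Import Order.TTheory GRing.Theory Num.Theory.
Local Open Scope ring_scope.

Definition poch {R : ringType} (x : R) (i : nat) : R :=
  \prod_(k < i) (x + k%:R).

Section Data.
Variables (R : realType) (d : nat) (r s : R).

Definition theta (i : nat) : R :=
  (d%:R - i%:R) * (d%:R - i%:R + r + s + 1).

Definition thetaS (i : nat) : R := i%:R.

Definition bS (i : nat) : R :=
  if (i < d)%N then
    (d%:R - i%:R) * (i%:R - d%:R - s)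
    * poch (2 * d%:R - 2 * i%:R + r + s + 2) i
    / poch (2 * d%:R - 2 * i%:R + r + s) i.+1
  else 0.

Definition cS (i : nat) : R :=
  if (0 < i)%N then
    i%:R * (i%:R - d%:R - r - 1)
    * poch (d%:R - i%:R + r + s + 1) (d - i)
    / poch (d%:R - i%:R + r + s + 2) (d - i).+1
  else 0.

Definition aS (i : nat) : R := thetaS 0 - bS i - cS i.

(* P_d(R) is identified with R^{d+1} via f |-> (f(theta_0), ..., f(theta_d))
   (the coordinates of f in the Lagrange basis at the distinct theta_i).
   Matrices act on column vectors.  *)

Definition Lmx : 'M[R]_d.+1 := \matrix_(i, j) (if i == j then theta i else 0).

Definition LSmx : 'M[R]_d.+1 :=
  \matrix_(i, j)
    (if (j == i.+1 :> nat) then bS i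
     else if (j == i :> nat) then aS i
     else if (j.+1 == i :> nat) then cS i
     else 0).

End Data.

Definition irred_tridiag {R : ringType} {n : nat} (M : 'M[R]_n) : Prop :=
  (forall i j : 'I_n, (i.+1 < j)%N \/ (j.+1 < i)%N -> M i j = 0) /\
  (forall i j : 'I_n, (i.+1 == j :> nat) -> M i j != 0 /\ M j i != 0).

Definition diagonal {R : ringType} {n : nat} (M : 'M[R]_n) : Prop :=
  forall i j : 'I_n, i != j -> M i j = 0.

(* Leonard pair on R^n (n > 0), for linear maps given by their matrices A, B
   in the standard basis: an ordered basis is the sequence of columns of an
   invertible matrix P, in which the maps have matrices invmx P *m A *m P. *)
Definition leonard_pair {R : fieldType} {n : nat} (A B : 'M[R]_n.+1) : Prop :=
  (exists P : 'M[R]_n.+1, P \in unitmx /\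
     diagonal (invmx P *m A *m P) /\ irred_tridiag (invmx P *m B *m P)) /\
  (exists Q : 'M[R]_n.+1, Q \in unitmx /\
     diagonal (invmx Q *m B *m Q) /\ irred_tridiag (invmx Q *m A *m Q)).

From mathcomp Require Import all_boot all_order all_algebra.
From mathcomp Require Import reals.
From mathcomp Require Import fingroup perm ring lra.
Set Implicit Arguments. Unset Strict Implicit. Unset Printing Implicit Defensive.
Import Order.TTheory GRing.Theory Num.Theory.
Local Open Scope ring_scope.

(* Since L is diagonal with distinct eigenvalues theta_i, a basis diagonalizing
   L is a rescaled permutation of the standard one, so the first half of the
   Leonard pair condition asks for a simultaneous permutation of the rows and
   columns of B = (L* + lambda)^2 making it irreducible tridiagonal.  For d = 2
   the corner entries of B are b*_0 b*_1 and c*_2 c*_1, both nonzero, while the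
   entries (0,1), (1,0) and (1,2), (2,1) are nonzero multiples of
   w01 = a*_0 + a*_1 + 2 lambda and w12 = a*_1 + a*_2 + 2 lambda.  The nonzero
   off-diagonal pairs of B then form a path exactly when one of w01, w12
   vanishes, and both vanish only if r = s.  The second half always holds: in
   the eigenbasis of L*, B is diagonal and L is irreducible tridiagonal. *)

Section MonomialConjugation.
Variables (F : fieldType) (n : nat).
Implicit Types (A B M N P : 'M[F]_n.+1) (s : 'S_n.+1).

Lemma irred_tridiag_eq0 M N :
  (forall i j, (M i j == 0) = (N i j == 0)) -> irred_tridiag M -> irred_tridiag N.
Proof.
move=> MN [far near]; split=> [i j /far /eqP | i j /near [Mij Mji]].
  by rewrite MN => /eqP.
by rewrite -!MN.
Qed.

Definition is_monomial_mx s P := forall i j, (P i j != 0) = (i == s j).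

Lemma monomial_mx_eq0 s P i j : is_monomial_mx s P -> i != s j -> P i j = 0.
Proof. by move=> Ps; apply: contraNeq; rewrite Ps. Qed.

Lemma mulmx_monomial_l s P :
  is_monomial_mx s^-1%g P -> forall B i j, (P *m B) i j = P i (s i) * B (s i) j.
Proof.
move=> Ps B i j; rewrite mxE (big_only1 (s i)) // => k ks _.
by rewrite (monomial_mx_eq0 Ps) ?mul0r // eq_sym -(inj_eq (@perm_inj _ s)) permKV.
Qed.

Lemma mulmx_monomial_r s P :
  is_monomial_mx s P -> forall B i j, (B *m P) i j = B i (s j) * P (s j) j.
Proof.
move=> Ps B i j; rewrite mxE (big_only1 (s j)) // => k ks _.
by rewrite (monomial_mx_eq0 Ps) ?mulr0.
Qed.

Lemma invmx_monomial s P :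
  P \in unitmx -> is_monomial_mx s P -> is_monomial_mx s^-1%g (invmx P).
Proof.
move=> Pu Ps i k; set j := s^-1%g k.
have := congr1 (fun M => M i j) (mulVmx Pu).
rewrite (mulmx_monomial_r Ps) /j permKV !mxE => QP.
have Pkj : P k j != 0 by rewrite Ps permKV.
have <- : (invmx P i k * P k j == 0) = (invmx P i k == 0).
  by rewrite mulf_eq0 (negbTE Pkj) orbF.
by rewrite QP; case: (i == _); rewrite ?oner_eq0 ?eqxx.
Qed.

Lemma conj_monomial_eq0 s P :
  P \in unitmx -> is_monomial_mx s P -> forall B i j,
  ((invmx P *m B *m P) i j == 0) = (B (s i) (s j) == 0).
Proof.
move=> Pu Ps B i j; have Qs := invmx_monomial Pu Ps.
rewrite (mulmx_monomial_r Ps) (mulmx_monomial_l Qs) !mulf_eq0 orbC orbA.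
have -> : (P (s j) j == 0) = false by apply/negbTE; rewrite Ps.
by have -> : (invmx P i (s i) == 0) = false by apply/negbTE; rewrite Qs permK.
Qed.

Lemma diag_conj_monomial A P :
  diagonal A -> injective (fun i => A i i) ->
  P \in unitmx -> diagonal (invmx P *m A *m P) -> exists s, is_monomial_mx s P.
Proof.
move=> Ad Ainj Pu; set D := invmx P *m A *m P => Dd.
have /matrixP AP : A *m P = P *m D by rewrite /D !mulmxA mulmxV ?mul1mx.
clearbody D.
have eigen i j : A i i * P i j = D j j * P i j.
  have := AP i j; rewrite !mxE (big_only1 i) => [|//|k ki _]; last first.
    by rewrite Ad ?mul0r // eq_sym.
  rewrite (big_only1 j) => [|//|k kj _]; last by rewrite Dd ?mulr0 // eq_sym.
  by move=> ->; rewrite mulrC.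
have same_row i i' j : P i j != 0 -> P i' j != 0 -> i = i'.
  move=> Pij Pi'j; apply: Ainj.
  by rewrite /= (mulIf Pij (eigen i j)) (mulIf Pi'j (eigen i' j)).
have /fin_all_exists [f Pf] j : exists i, P i j != 0.
  apply/existsP; apply: contraT; rewrite negb_exists => /forallP P0.
  have := congr1 (fun M => M j j) (mulVmx Pu).
  rewrite !mxE eqxx big1 => [/eqP|k _]; first by rewrite eq_sym oner_eq0.
  by move: (P0 k); rewrite negbK => /eqP ->; rewrite mulr0.
have Pshape i j : (P i j != 0) = (i == f j).
  by apply/idP/eqP => [Pij|->]; [exact: same_row Pij (Pf j)|exact: Pf].
have QP j j' : invmx P j (f j') * P (f j') j' = (j == j')%:R.
  have := congr1 (fun M => M j j') (mulVmx Pu).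
  rewrite !mxE (big_only1 (f j')) // => k kf _.
  by apply/eqP; rewrite mulf_eq0 -[P k j' == 0]negbK Pshape kf orbT.
have Qf j : invmx P j (f j) != 0.
  by apply/eqP => Q0; move: (QP j j); rewrite Q0 mul0r eqxx => /eqP; rewrite eq_sym oner_eq0.
have f_inj : injective f.
  move=> j j' fj; apply/eqP; apply: contraT => jj'.
  move: (QP j j'); rewrite (negbTE jj') -fj => /eqP.
  by rewrite mulf_eq0 (negbTE (Qf j)) fj (negbTE (Pf j')).
by exists (perm f_inj) => i j; rewrite permE.
Qed.

Lemma conj_perm_mx s B :
  invmx (perm_mx s^-1%g) *m B *m perm_mx s^-1%g = \matrix_(i, j) B (s i) (s j).
Proof.
have sV : perm_mx s *m perm_mx s^-1%g = 1%:M :> 'M[F]_n.+1.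
  by rewrite -perm_mxM mulgV perm_mx1.
have -> : invmx (perm_mx s^-1%g) = perm_mx s :> 'M[F]_n.+1.
  by rewrite -[invmx _]mul1mx -sV -mulmxA mulmxV ?mulmx1 ?unitmx_perm.
by apply/matrixP => i j; rewrite -row_permE -col_permE !mxE.
Qed.

Lemma diag_conj_irred_tridiagP A B :
  diagonal A -> injective (fun i => A i i) ->
  (exists P, P \in unitmx /\ diagonal (invmx P *m A *m P)
             /\ irred_tridiag (invmx P *m B *m P))
  <-> exists s, irred_tridiag (\matrix_(i, j) B (s i) (s j)).
Proof.
move=> Ad Ainj; split=> [[P [Pu [PAd PBt]]] | [s sBt]].
  have [s Ps] := diag_conj_monomial Ad Ainj Pu PAd.
  exists s; apply: irred_tridiag_eq0 PBt => i j.
  by rewrite (conj_monomial_eq0 Pu Ps) mxE.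
exists (perm_mx s^-1%g); rewrite !conj_perm_mx unitmx_perm; do !split=> //.
by move=> i j ij; rewrite mxE Ad // (inj_eq perm_inj).
Qed.

End MonomialConjugation.

Section ThreeByThree.
Variable F : fieldType.
Implicit Types e f : nat -> nat -> F.

Definition mx3 e : 'M[F]_3 := \matrix_(i, j) e i j.

Definition mul3 e f i j := e i 0 * f 0 j + e i 1 * f 1 j + e i 2 * f 2 j.

Lemma mul_mx3 e f : mx3 e *m mx3 f = mx3 (mul3 e f).
Proof. by apply/matrixP => i j; rewrite !mxE !big_ord_recr big_ord0 /= !mxE add0r. Qed.

Lemma eq_mx3 e f :
  (forall i j, (i < 3)%N -> (j < 3)%N -> e i j = f i j) -> mx3 e = mx3 f.
Proof. by move=> ef; apply/matrixP => i j; rewrite !mxE ef. Qed.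

Lemma mx3_perm (s : 'S_3) (p : nat -> nat) e :
  (forall i : 'I_3, s i = p i :> nat) ->
  \matrix_(i, j) mx3 e (s i) (s j) = mx3 (fun i j => e (p i) (p j)).
Proof. by move=> sp; apply/matrixP => i j; rewrite !mxE !sp. Qed.

Definition det3 e :=
  e 0 0 * (e 1 1 * e 2 2 - e 1 2 * e 2 1) - e 0 1 * (e 1 0 * e 2 2 - e 1 2 * e 2 0)
  + e 0 2 * (e 1 0 * e 2 1 - e 1 1 * e 2 0).

Definition adj3 e i j :=
  match i, j with
  | 0, 0 => e 1 1 * e 2 2 - e 1 2 * e 2 1
  | 0, 1 => e 0 2 * e 2 1 - e 0 1 * e 2 2
  | 0, 2 => e 0 1 * e 1 2 - e 0 2 * e 1 1
  | 1, 0 => e 1 2 * e 2 0 - e 1 0 * e 2 2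
  | 1, 1 => e 0 0 * e 2 2 - e 0 2 * e 2 0
  | 1, 2 => e 0 2 * e 1 0 - e 0 0 * e 1 2
  | 2, 0 => e 1 0 * e 2 1 - e 1 1 * e 2 0
  | 2, 1 => e 0 1 * e 2 0 - e 0 0 * e 2 1
  | 2, 2 => e 0 0 * e 1 1 - e 0 1 * e 1 0
  | _, _ => 0
  end.

Lemma mx3_unit e : det3 e != 0 -> mx3 e \in unitmx.
Proof.
move=> e0; suff /mulmx1_unit[] : mx3 e *m mx3 (fun i j => adj3 e i j / det3 e) = 1%:M by [].
have -> : 1%:M = mx3 (fun i j => (i == j)%:R) by apply/matrixP => i j; rewrite !mxE.
rewrite mul_mx3; apply: eq_mx3 => -[|[|[|i]]] [|[|[|j]]] // _ _.
all: by move: e0; rewrite /mul3 /det3 /= => e0; field.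
Qed.

Lemma irred_tridiag_mx3 e :
  e 0 2 == 0 -> e 2 0 == 0 -> e 0 1 != 0 -> e 1 0 != 0 -> e 1 2 != 0 -> e 2 1 != 0 ->
  irred_tridiag (mx3 e).
Proof.
move=> /eqP e02 /eqP e20 e01 e10 e12 e21.
by split=> -[[|[|[|i]]] hi] -[[|[|[|j]]] hj] //=; rewrite !mxE // => -[].
Qed.

Section SymmetricZeroPattern.
Variable e : nat -> nat -> F.
Hypothesis esym : forall i j, (i < 3)%N -> (j < 3)%N -> (e i j == 0) = (e j i == 0).

Let o1 : 'I_3 := @Ordinal 3 1 isT.

Lemma perm_irred_tridiag3_count (s : 'S_3) :
  irred_tridiag (\matrix_(i, j) mx3 e (s i) (s j)) ->
  ((e 0 1 == 0%R) + (e 0 2 == 0%R) + (e 1 2 == 0%R) = 1)%N.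
Proof.
case=> far near; have z02 := far ord0 ord_max (or_introl isT).
have [n01 _] := near ord0 o1 isT; have [n12 _] := near o1 ord_max isT.
have d01 : s ord0 != s o1 :> nat by rewrite (inj_eq val_inj) (inj_eq perm_inj).
have d02 : s ord0 != s ord_max :> nat by rewrite (inj_eq val_inj) (inj_eq perm_inj).
have d12 : s o1 != s ord_max :> nat by rewrite (inj_eq val_inj) (inj_eq perm_inj).
move: z02 n01 n12 d01 d02 d12; rewrite !mxE.
case: (s ord0) (s o1) (s ord_max) => -[|[|[|x]]] hx [[|[|[|y]]] hy] [[|[|[|z]]] hz] //=.
all: move=> /eqP + + + _ _ _.
all: rewrite ?(@esym 1 0 isT isT) ?(@esym 2 0 isT isT) ?(@esym 2 1 isT isT).
all: by move=> -> /negbTE-> /negbTE->.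
Qed.

Lemma count_perm_irred_tridiag3 :
  ((e 0 1 == 0%R) + (e 0 2 == 0%R) + (e 1 2 == 0%R) = 1)%N ->
  exists s : 'S_3, irred_tridiag (\matrix_(i, j) mx3 e (s i) (s j)).
Proof.
have e10 := @esym 1 0 isT isT; have e20 := @esym 2 0 isT isT; have e21 := @esym 2 1 isT isT.
case E01 : (e 0 1 == 0); case E02 : (e 0 2 == 0); case E12 : (e 1 2 == 0) => // _.
- exists (tperm o1 ord_max).
  rewrite (mx3_perm (p := [fun i => i with 1%N |-> 2%N, 2%N |-> 1%N])); last first.
    by move=> [[|[|[|i]]] hi]; rewrite permE.
  by apply: irred_tridiag_mx3; rewrite /= ?e10 ?e20 ?e21 ?E01 ?E02 ?E12.
- exists 1%g; rewrite (mx3_perm (p := id)) => [|i]; last by rewrite perm1.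
  by apply: irred_tridiag_mx3; rewrite /= ?e10 ?e20 ?e21 ?E01 ?E02 ?E12.
- exists (tperm ord0 o1).
  rewrite (mx3_perm (p := [fun i => i with 0%N |-> 1%N, 1%N |-> 0%N])); last first.
    by move=> [[|[|[|i]]] hi]; rewrite permE.
  by apply: irred_tridiag_mx3; rewrite /= ?e10 ?e20 ?e21 ?E01 ?E02 ?E12.
Qed.

Lemma perm_irred_tridiag3P :
  (exists s : 'S_3, irred_tridiag (\matrix_(i, j) mx3 e (s i) (s j))) <->
  ((e 0 1 == 0%R) + (e 0 2 == 0%R) + (e 1 2 == 0%R) = 1)%N.
Proof.
split=> [[s]|]; [exact: perm_irred_tridiag3_count | exact: count_perm_irred_tridiag3].
Qed.

End SymmetricZeroPattern.

End ThreeByThree.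

Lemma exactly_one_eq (T : eqType) (a u v : T) :
  ((u == a) + (v == a) = 1)%N <-> u != v /\ (u = a \/ v = a).
Proof.
case: (eqVneq u a) => [->|ua]; case: (eqVneq v a) => [->|va] /=.
- by split=> [/eqP | []]; rewrite ?eqxx.
- by split=> // _; split=> //; left.
- by split=> // _; split=> //; right.
- by split=> // -[_ []] /eqP; rewrite ?(negbTE ua) ?(negbTE va).
Qed.

Lemma theta_inj (R : realType) (d : nat) (r s : R) :
  -1 < r -> -1 < s -> injective (fun i : 'I_d.+1 => theta d r s i).
Proof.
move=> hr hs.
have eq_sqr (k m : nat) :
    k%:R * (k%:R + r + s + 1) = m%:R * (m%:R + r + s + 1) :> R -> k = m.
  move=> km; apply/eqP; rewrite -(eqr_nat R) -subr_eq0.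
  have : (k%:R - m%:R) * (k%:R + m%:R + r + s + 1) = 0 :> R.
    by rewrite -(subrr (m%:R * (m%:R + r + s + 1))) -{1}km; ring.
  rewrite -natrD; case: (posnP (k + m)) => [/eqP | km_pos].
    by rewrite addn_eq0 => /andP[/eqP-> /eqP->]; rewrite subrr.
  have : 1 <= (k + m)%:R :> R by rewrite ler1n.
  by move=> ? /eqP; rewrite mulf_eq0 => /orP[// | /eqP ?]; lra.
move=> i j; rewrite /theta -!natrB ?leq_ord // => /eq_sqr ij.
by apply: val_inj; rewrite /= -(subKn (leq_ord i)) ij subKn ?leq_ord.
Qed.

Section DegreeTwo.
Variables (R : realType) (r s lambda : R).
Hypotheses (hr : -1 < r) (hs : -1 < s).

(* [lra] and [nra] do not use section hypotheses, so [bounds] passes them. *)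
Ltac bounds := have := hr; have := hs; nra.
Ltac neq0 := done || (repeat (apply/andP; split); apply/eqP => ?; bounds).

Definition b0 := - 2 * (s + 2) / (r + s + 4).
Definition b1 := - (s + 1) * (r + s + 4) / ((r + s + 2) * (r + s + 3)).
Definition c1 := - (r + 2) * (r + s + 2) / ((r + s + 3) * (r + s + 4)).
Definition c2 := - 2 * (r + 1) / (r + s + 2).

Lemma bc_neq0 : [/\ b0 != 0, b1 != 0, c1 != 0 & c2 != 0].
Proof. by rewrite /b0 /b1 /c1 /c2; split; rewrite !mulf_neq0 ?invr_neq0 ?mulf_neq0 //; neq0. Qed.

(* The diagonal entries are a*_i = - b*_i - c*_i, as theta*_0 = 0. *)
Definition LSe (i j : nat) : R :=
  match i, j with
  | 0, 0 => - b0 | 0, 1 => b0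
  | 1, 0 => c1 | 1, 1 => - b1 - c1 | 1, 2 => b1
  | 2, 1 => c2 | 2, 2 => - c2
  | _, _ => 0
  end.

Lemma LSmx2E : LSmx 2 r s = mx3 LSe.
Proof.
apply/matrixP => -[[|[|[|i]]] hi] -[[|[|[|j]]] hj] //; rewrite !mxE /=.
all: rewrite /aS /bS /cS /thetaS /poch /b0 /b1 /c1 /c2 /= ?subnn ?subn0 ?subSS.
all: rewrite ?big_ord_recr ?big_ord0 /= ?subn0; field; neq0.
Qed.

Definition Me (i j : nat) : R := LSe i j + (i == j)%:R * lambda.

Lemma shift_LSmx2E : LSmx 2 r s + lambda%:M = mx3 Me.
Proof. by rewrite LSmx2E; apply/matrixP => i j; rewrite !mxE /Me mulr_natl. Qed.

Definition Le (i j : nat) : R := (i == j)%:R * theta 2 r s i.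

Lemma Lmx2E : Lmx 2 r s = mx3 Le.
Proof.
apply/matrixP => i j; rewrite !mxE /Le -[(i == j :> nat)]/(i == j).
by case: (i == j); rewrite ?mul1r ?mul0r.
Qed.

(* Column j is the eigenvector of L* for theta*_j = j, obtained by solving
   the three-term recurrence of L* from the top row down. *)
Definition Qe (i j : nat) : R :=
  match i with
  | 0 => 1
  | 1 => (j%:R + b0) / b0
  | 2 => ((j%:R + b1 + c1) * ((j%:R + b0) / b0) - c1) / b1
  | _ => 0
  end.

Definition Te (i j : nat) : R :=
  match i, j with
  | 0, 0 => 2 * (r + 1) | 0, 1 => r + 1
  | 1, 0 => 2 * (s + 2) | 1, 1 => r + s + 4 | 1, 2 => 2 * (r + 2)
  | 2, 1 => s + 1 | 2, 2 => 2 * (s + 1)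
  | _, _ => 0
  end.

Lemma Me_eigenvectors :
  mx3 Me *m mx3 Qe = mx3 Qe *m mx3 (fun i j => (i == j)%:R * (j%:R + lambda)).
Proof.
rewrite !mul_mx3; apply: eq_mx3 => -[|[|[|i]]] [|[|[|j]]] // _ _.
all: rewrite /mul3 /Me /LSe /Qe /b0 /b1 /c1 /c2 /=; field; neq0.
Qed.

Lemma Le_in_eigenbasis : mx3 Le *m mx3 Qe = mx3 Qe *m mx3 Te.
Proof.
rewrite !mul_mx3; apply: eq_mx3 => -[|[|[|i]]] [|[|[|j]]] // _ _.
all: rewrite /mul3 /Le /theta /Qe /Te /b0 /b1 /c1 /=; field; neq0.
Qed.

Lemma Qe_unit : mx3 Qe \in unitmx.
Proof.
apply: mx3_unit; apply/eqP => Q0.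
have : det3 Qe * (b0 ^+ 2 * b1) = 2 by rewrite /det3 /Qe /b0 /b1 /c1 /=; field; neq0.
by rewrite Q0 mul0r => /eqP; rewrite eq_sym pnatr_eq0.
Qed.

Lemma Te_irred_tridiag : irred_tridiag (mx3 Te).
Proof. by apply: irred_tridiag_mx3 => //=; neq0. Qed.

Lemma diag_sqr_tridiag_L :
  exists Q, Q \in unitmx
    /\ diagonal (invmx Q *m ((LSmx 2 r s + lambda%:M) *m (LSmx 2 r s + lambda%:M)) *m Q)
    /\ irred_tridiag (invmx Q *m Lmx 2 r s *m Q).
Proof.
exists (mx3 Qe); split; first exact: Qe_unit.
rewrite shift_LSmx2E Lmx2E; split.
  rewrite -!mulmxA Me_eigenvectors [mx3 Me *m _]mulmxA Me_eigenvectors.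
  rewrite -mulmxA mulKmx ?Qe_unit // mul_mx3.
  by move=> [[|[|[|i]]] hi] [[|[|[|j]]] hj] //= _; rewrite !mxE /mul3 /=; ring.
by rewrite -mulmxA Le_in_eigenbasis mulKmx ?Qe_unit //; exact: Te_irred_tridiag.
Qed.

(* Closed forms of w01 = a*_0 + a*_1 + 2 lambda and w12 = a*_1 + a*_2 + 2 lambda. *)
Definition w01 := 2 * (lambda + 1) - (r - s) / (r + s + 2).
Definition w12 := 2 * (lambda + 1) - (s - r) / (r + s + 4).

Lemma w01_eq0 : w01 = 0 <-> 2 * (lambda + 1) = (r - s) / (r + s + 2).
Proof. by rewrite /w01; split=> [/eqP | ->]; rewrite ?subrr // subr_eq0 => /eqP. Qed.

Lemma w12_eq0 : w12 = 0 <-> 2 * (lambda + 1) = (s - r) / (r + s + 4).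
Proof. by rewrite /w12; split=> [/eqP | ->]; rewrite ?subrr // subr_eq0 => /eqP. Qed.

Lemma eq_w01_w12 : (w01 == w12) = (r == s).
Proof.
have -> : w01 = w12 + (s - r) * ((2 * (r + s) + 6) / ((r + s + 2) * (r + s + 4))).
  by rewrite /w01 /w12; field; neq0.
have pos : 0 < (2 * (r + s) + 6) / ((r + s + 2) * (r + s + 4)).
  by apply: divr_gt0; bounds.
by rewrite -subr_eq0 addrAC subrr add0r mulf_eq0 (gt_eqF pos) orbF subr_eq0 eq_sym.
Qed.

Lemma sqr_Me_near :
  [/\ mul3 Me Me 0 1 = b0 * w01, mul3 Me Me 1 0 = c1 * w01,
      mul3 Me Me 1 2 = b1 * w12 & mul3 Me Me 2 1 = c2 * w12].
Proof. by split; rewrite /mul3 /Me /LSe /w01 /w12 /b0 /b1 /c1 /c2 /=; field; neq0. Qed.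

Lemma sqr_Me_far : mul3 Me Me 0 2 = b0 * b1 /\ mul3 Me Me 2 0 = c2 * c1.
Proof. by split; rewrite /mul3 /Me /LSe /=; ring. Qed.

Lemma diag_L_tridiag_sqrP :
  (exists P, P \in unitmx /\ diagonal (invmx P *m Lmx 2 r s *m P)
     /\ irred_tridiag (invmx P *m ((LSmx 2 r s + lambda%:M) *m (LSmx 2 r s + lambda%:M)) *m P))
  <-> ((w01 == 0%R) + (w12 == 0%R) = 1)%N.
Proof.
have [nb0 nb1 nc1 nc2] := bc_neq0.
have [e01 e10 e12 e21] := sqr_Me_near; have [e02 e20] := sqr_Me_far.
have far0 := (negbTE (mulf_neq0 nb0 nb1), negbTE (mulf_neq0 nc2 nc1)).
have near0 (a y : R) : a != 0 -> (a * y == 0) = (y == 0).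
  by move=> na; rewrite mulf_eq0 (negbTE na).
have Ld : diagonal (Lmx 2 r s) by move=> i j ij; rewrite mxE (negbTE ij).
have Linj : injective (fun i => Lmx 2 r s i i).
  by move=> i j; rewrite !mxE !eqxx; exact: theta_inj.
apply: (iff_trans (diag_conj_irred_tridiagP _ Ld Linj)).
rewrite shift_LSmx2E mul_mx3; apply: (iff_trans (perm_irred_tridiag3P _)); last first.
  by rewrite e01 e02 e12 far0 (near0 _ _ nb0) (near0 _ _ nb1) addn0.
move=> [|[|[|i]]] [|[|[|j]]] // _ _.
all: by rewrite ?e01 ?e10 ?e12 ?e21 ?e02 ?e20 ?far0 ?(near0 _ _ nb0) ?(near0 _ _ nb1)
               ?(near0 _ _ nc1) ?(near0 _ _ nc2).
Qed.

End DegreeTwo.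

Theorem corollary2p11 (R : realType) (r s lambda : R) :
  -1 < r -> -1 < s ->
  (leonard_pair (Lmx 2 r s)
     ((LSmx 2 r s + lambda%:M) *m (LSmx 2 r s + lambda%:M))
   <->
   (r != s /\
    (2 * (lambda + 1) = (r - s) / (r + s + 2) \/
     2 * (lambda + 1) = (s - r) / (r + s + 4)))).
Proof.
move=> hr hs; rewrite /leonard_pair (diag_L_tridiag_sqrP lambda hr hs) exactly_one_eq.
rewrite (eq_w01_w12 lambda hr hs) (w01_eq0 r s lambda) (w12_eq0 r s lambda).
by split=> [[]|] //; split=> //; exact: diag_sqr_tridiag_L.
Qed.
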